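(* Assume CAT (in the form stated in the context). Let $p\ge 2$ be a natural number and let $T\subseteq{}^{<\omega_1}p$ be a binarisable special Aronszajn tree. Then there is a colouring $c:T^{[2]}\to p+1=\{0,1,\dots,p\}$ such that for every subtree $S$ of $T$, the set $\{c(\{s,t\}):\{s,t\}\in S^{[2]}\}$ has at least $3$ elements.
   Context: Trees are subsets $T\subseteq{}^{<\omega_1}p$ (functions from countable ordinals into $p=\{0,\dots,p-1\}$) closed under initial segments, ordered by $s<_T t$ iff $t$ properly extends $s$; $\lg(s)$ denotes the domain (an ordinal) of $s$, and $s^\frown j$ is the one-point extension of $s$ by value $j$. $T$ is an Aronszajn tree if it is uncountable, every level is countable, and it has no uncountable chain. $T$ is special if it is a union of countably many antichains. For $s,t\in T$, the meet $s\wedge t$ is the longest common initial segment of $s$ and $t$. A subtree of $T$ is an uncountable subset $S\subseteq T$ closed under meets ($s,t\in S\Rightarrow s\wedge t\in S$). A subtree $S$ is binary if every node of $S$ has at most two distinct immediate successors in $S$ (i.e. elements of $S$ above it with no element of $S$ strictly in between). $T$ is binarisable if every subtree of $T$ contains a binary subtree. $T^{[2]}=\{\{s,t\}: s<_T t\}$, and for $S\subseteq T$, $S^{[2]}=\{\{s,t\}: s,t\in S,\ s<_T t\}$. Colouring Axiom for Trees (CAT), in the form used here: for every Aronszajn tree $T$, every subtree $S$ of $T$ (including $S=T$) and every partition $S=K_0\cup K_1$, there are an uncountable $X\subseteq S$ and $i<2$ such that $x\wedge y\in K_i$ for all distinct $x,y\in X$; and likewise for partitions of $S$ into any finite number of pieces.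 *)

From mathcomp Require Import all_boot.
From mathcomp Require Import boolp classical_sets cardinality.
Set Implicit Arguments. Unset Strict Implicit. Unset Printing Implicit Defensive.
Local Open Scope classical_set_scope.

(** This characterizes omega_1
   up to order isomorphism, so its elements are the countable ordinals. *)
Definition is_omega1 (W : Type) (lt : W -> W -> Prop) : Prop :=
  [/\ (forall a, ~ lt a a),
      (forall a b c, lt a b -> lt b c -> lt a c),
      (forall a b, lt a b \/ a = b \/ lt b a)
    & well_founded lt] /\
  ~ countable [set: W] /\ (forall a, countable [set b | lt b a]).

Section Trees.
Variables (W : Type) (lt : W -> W -> Prop).

Definition le (a b : W) := lt a b \/ a = b.

(** A node is a pair (lg s, values); the value function is normalised to be
    0 outside lg s.  [valid p s] says s is an element of ^{<omega_1} p,
    i.e. a function lg(s) -> {0,...,p-1}. *)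
Definition node := (W * (W -> nat))%type.
Definition lg (s : node) : W := s.1.

Definition valid (p : nat) (s : node) : Prop :=
  forall b, (lt b s.1 -> s.2 b < p) /\ (~ lt b s.1 -> s.2 b = 0).

Definition prefix (s t : node) : Prop :=
  le s.1 t.1 /\ forall b, lt b s.1 -> s.2 b = t.2 b.

Definition tlt (s t : node) : Prop := prefix s t /\ lt s.1 t.1.

Definition is_tree (p : nat) (T : set node) : Prop :=
  (forall s, T s -> valid p s) /\
  (forall t a, T t -> le a t.1 ->
     exists s, T s /\ s.1 = a /\ prefix s t).

Definition is_meet (p : nat) (s t m : node) : Prop :=
  valid p m /\ prefix m s /\ prefix m t /\
  forall u, valid p u -> prefix u s -> prefix u t -> prefix u m.

Definition level (T : set node) (a : W) : set node := [set t | T t /\ t.1 = a].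

Definition chain (C : set node) : Prop :=
  forall s t, C s -> C t -> s <> t -> tlt s t \/ tlt t s.

Definition antichain (A : set node) : Prop :=
  forall s t, A s -> A t -> ~ tlt s t.

Definition aronszajn (p : nat) (T : set node) : Prop :=
  [/\ is_tree p T, ~ countable T,
      (forall a, countable (level T a))
    & forall C, C `<=` T -> chain C -> countable C].

Definition special (T : set node) : Prop :=
  exists A : nat -> set node, T = \bigcup_n A n /\ forall n, antichain (A n).

Definition subtree (p : nat) (T S : set node) : Prop :=
  [/\ S `<=` T, ~ countable S
    & forall s t, S s -> S t -> exists m, S m /\ is_meet p s t m].

Definition imm_succ (S : set node) (s u : node) : Prop :=
  S u /\ tlt s u /\ ~ (exists v, S v /\ tlt s v /\ tlt v u).

Definition binary (S : set node) : Prop :=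
  forall s u1 u2 u3, S s -> imm_succ S s u1 -> imm_succ S s u2 -> imm_succ S s u3 ->
    u1 = u2 \/ u1 = u3 \/ u2 = u3.

Definition binarisable (p : nat) (T : set node) : Prop :=
  forall S, subtree p T S -> exists S', S' `<=` S /\ subtree p T S' /\ binary S'.

(** CAT: for every Aronszajn tree T \subseteq ^{<omega_1} q (any q), every
    subtree S of T (including T itself) and every partition of S into n
    finitely many pieces K_0,...,K_{n-1} (given by k : node -> nat with
    x \in K_(k x)), there are an uncountable X \subseteq S and i < n with
    x /\ y \in K_i for all distinct x, y \in X. *)
Definition CAT : Prop :=
  forall (q : nat) (T : set node), aronszajn q T ->
  forall S, (S = T \/ subtree q T S) ->
  forall (n : nat) (k : node -> nat), (forall x, S x -> k x < n) ->
  exists X i, [/\ X `<=` S, ~ countable X, i < n &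
    forall x y, X x -> X y -> x <> y ->
      forall m, S m -> is_meet q x y m -> k m = i].

End Trees.

From Pilot Require Import Defs.
From mathcomp Require Import all_boot.
From mathcomp Require Import boolp classical_sets cardinality.
Import Defs.
Set Implicit Arguments. Unset Strict Implicit. Unset Printing Implicit Defensive.
Local Open Scope classical_set_scope.

(* Since T is special, it carries a rank r : T -> nat that is injective along
   chains (the index of an antichain containing the node).  Colour s <_T t by
   t(lg s) < p when r s < r t, and by p otherwise.  A meet-closed set of nodes
   is countable as soon as there is a bound B with r s < B t whenever s <_T t:
   a node t is then determined by the finite word of length B t whose i-th
   letter is t(lg s) for the unique predecessor s of rank i.  Taking B = r,
   every subtree contains a pair coloured p.  Since the chains of a subtree S
   are countable, some m in S has two directions j <> j' each followed by
   uncountably many nodes of S; taking B constant equal to r m + 1 on these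
   cones yields pairs coloured j and j'. *)

Lemma countable_setU T (A B : set T) :
  countable A -> countable B -> countable (A `|` B).
Proof.
move=> cA cB.
have sub : A `|` B `<=` \bigcup_(b in [set: bool]) (if b then A else B).
  by move=> x [Ax|Bx]; [exists true|exists false].
by apply: (sub_countable (subset_card_le sub)); apply: bigcup_countable => // -[].
Qed.

Section Omega1Trees.
Variables (W : Type) (lt : W -> W -> Prop) (p : nat).
Hypothesis Hw : is_omega1 lt.

Let lt_irrefl : forall a, ~ lt a a. Proof. by case: Hw => -[]. Qed.
Let lt_trans : forall a b c, lt a b -> lt b c -> lt a c. Proof. by case: Hw => -[]. Qed.
Let lt_total : forall a b, lt a b \/ a = b \/ lt b a. Proof. by case: Hw => -[]. Qed.
Let lt_wf : well_founded lt. Proof. by case: Hw => -[]. Qed.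

Lemma lt_minimal (P : W -> Prop) x :
  P x -> exists a, P a /\ forall b, P b -> ~ lt b a.
Proof.
move=> Px; apply: contrapT => noMin; move: Px.
elim/(well_founded_ind lt_wf): x => x IH Px.
by apply: noMin; exists x; split => // b Pb ltbx; apply: IH ltbx Pb.
Qed.

Lemma le_of_not_lt a b : ~ lt b a -> le lt a b.
Proof. by case: (lt_total a b) => [|[|]]; [left|right|]. Qed.

Lemma valid_node_eq (a b : node W) : valid lt p a -> valid lt p b ->
  a.1 = b.1 -> (forall c, lt c a.1 -> a.2 c = b.2 c) -> a = b.
Proof.
case: a b => [a1 a2] [b1 b2] /= va vb eq1 eq_below; subst b1; congr pair.
apply: funext => c; case: (pselect (lt c a1)) => [|ltN]; first exact: eq_below.
by move: (proj2 (va c) ltN) (proj2 (vb c) ltN) => /= -> ->.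
Qed.

Lemma prefix_neq_tlt (a b : node W) : valid lt p a -> valid lt p b ->
  prefix lt a b -> a <> b -> tlt lt a b.
Proof.
move=> va vb [[ltab|eqab] agree] neq; first by split => //; split => //; left.
by case: neq; apply: valid_node_eq.
Qed.

Lemma prefix_of_prefixes (a b t : node W) : prefix lt a t -> prefix lt b t ->
  le lt a.1 b.1 -> prefix lt a b.
Proof.
move=> [_ at_] [_ bt] leab; split => // c ltc; rewrite at_ // bt //.
by case: leab => [|<-] //; apply: lt_trans.
Qed.

Lemma tlt_trans (a b c : node W) : tlt lt a b -> tlt lt b c -> tlt lt a c.
Proof.
move=> [[_ ab] ltab] [[_ bc] ltbc]; have ltac := lt_trans ltab ltbc.
split => //; split; first by left.
by move=> d ltd; rewrite ab // bc //; apply: lt_trans ltab.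
Qed.

Lemma tlt_below_total (a b t : node W) : valid lt p a -> valid lt p b ->
  tlt lt a t -> tlt lt b t -> a <> b -> tlt lt a b \/ tlt lt b a.
Proof.
move=> va vb [at_ _] [bt _] neq.
case: (lt_total a.1 b.1) => [ltab|[eqab|ltba]].
- by left; apply: prefix_neq_tlt => //; apply: prefix_of_prefixes at_ bt _; left.
- by left; apply: prefix_neq_tlt => //; apply: prefix_of_prefixes at_ bt _; right.
- right; apply: prefix_neq_tlt => //; last by move=> eq; apply: neq.
  by apply: prefix_of_prefixes bt at_ _; left.
Qed.

(* Otherwise the initial segment of x of length min {a | m.1 < a} would be a
   common prefix of x and y strictly longer than their meet. *)
Lemma meet_splits (x y m : node W) : valid lt p x -> valid lt p y ->
  is_meet lt p x y m -> tlt lt m x -> tlt lt m y -> x.2 m.1 <> y.2 m.1.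
Proof.
move=> vx vy [vm [mx [my m_max]]] [_ ltmx] [_ ltmy] eqxy.
have [a [ltma a_min]] := lt_minimal ltmx.
have a_le b : lt m.1 b -> le lt a b by move=> ltmb; apply: le_of_not_lt; apply: a_min.
have below_a b : lt b a -> le lt b m.1.
  by move=> ltba; apply: le_of_not_lt => ltmb; apply: (a_min b ltmb).
pose s : node W := (a, fun b => if pselect (lt b a) then x.2 b else 0).
have vs : valid lt p s.
  move=> b /=; case: pselect => ltba; split => // ltN; try by case: ltN.
  apply: (proj1 (vx b)); case: (a_le _ ltmx) => [|<-] //; exact: lt_trans.
have sx : prefix lt s x by split; [apply: a_le | move=> b /= ltba; case: pselect].
have sy : prefix lt s y.
  split; first exact: a_le ltmy.
  move=> b; rewrite /s /= => ltba; case: pselect => [_|] //=.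
  case: (below_a b ltba) => [ltbm|->] //.
  by rewrite -(proj2 mx b ltbm) -(proj2 my b ltbm).
have [[ltam|eqam] _] := m_max s vs sx sy.
  by apply: (lt_irrefl (lt_trans ltam ltma)).
by move: ltma; rewrite -[a]/(s.1) eqam => /lt_irrefl.
Qed.

Lemma meet_cases (x y m : node W) : valid lt p x -> valid lt p y -> x <> y ->
  is_meet lt p x y m ->
  tlt lt x y \/ tlt lt y x \/ [/\ tlt lt m x, tlt lt m y & x.2 m.1 <> y.2 m.1].
Proof.
move=> vx vy neq M; have [vm [mx [my _]]] := M.
case: (pselect (m = x)) => [eqmx|nemx].
  by left; apply: prefix_neq_tlt => //; rewrite -eqmx.
case: (pselect (m = y)) => [eqmy|nemy].
  by right; left; apply: prefix_neq_tlt => //; rewrite -eqmy.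
have tmx := prefix_neq_tlt vm vx mx nemx; have tmy := prefix_neq_tlt vm vy my nemy.
by right; right; split => //; apply: meet_splits.
Qed.

Section Labelling.
Variables (U : set (node W)) (h B : node W -> nat).
Hypothesis U_valid : forall x, U x -> valid lt p x.
Hypothesis U_meet : forall x y, U x -> U y -> exists z, U z /\ is_meet lt p x y z.
Hypothesis h_label : forall s t, U s -> U t -> tlt lt s t -> h s <> h t /\ h s < B t.

Definition label_letter (t : node W) (i : nat) : option nat :=
  if pselect (exists s, U s /\ tlt lt s t /\ h s = i) is left ex
  then Some (t.2 (projT1 (cid ex)).1) else None.

Lemma label_letterE s t : U s -> U t -> tlt lt s t ->
  label_letter t (h s) = Some (t.2 s.1).
Proof.
move=> Us Ut st; rewrite /label_letter; case: pselect => [ex|]; last first.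
  by case; exists s.
case: (cid ex) => s' [Us' [s't eqh]] /=; congr (Some (t.2 _.1)).
apply: contrapT => neq.
have [/h_label ne|/h_label ne] := tlt_below_total (U_valid Us') (U_valid Us) s't st neq.
- exact: (proj1 (ne Us' Us)).
- exact: (proj1 (ne Us Us')) (esym eqh).
Qed.

Lemma label_letter_Some t i v : label_letter t i = Some v ->
  exists s, U s /\ tlt lt s t /\ h s = i.
Proof. by rewrite /label_letter; case: pselect. Qed.

Lemma label_letter_self t : U t -> label_letter t (h t) = None.
Proof.
move=> Ut; case E : label_letter => [v|] //.
have [s [Us [st eqh]]] := label_letter_Some E.
by case: (h_label Us Ut st).
Qed.

Lemma countable_labelled : countable U.
Proof.
pose code t := mkseq (label_letter t) (B t).
apply/countable_injP; exists (fun t => pickle (code t)).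
move=> t t'; rewrite !in_setE => Ut Ut' /(pcan_inj pickleK_inv) eq_code.
apply: contrapT => neq.
have eqB : B t = B t' by have := congr1 size eq_code; rewrite !size_mkseq.
have eq_letter i : i < B t -> label_letter t i = label_letter t' i.
  by move=> ltiB; have := congr1 (nth None ^~ i) eq_code; rewrite !nth_mkseq // -eqB.
have [z [Uz M]] := U_meet Ut Ut'.
case: (meet_cases (U_valid Ut) (U_valid Ut') neq M) => [tt'|[t't|[zt zt' differ]]].
- have ltB := proj2 (h_label Ut Ut' tt'); rewrite -eqB in ltB.
  by have := label_letterE Ut Ut' tt'; rewrite -(eq_letter _ ltB) label_letter_self.
- have ltB := proj2 (h_label Ut' Ut t't).
  by have := label_letterE Ut' Ut t't; rewrite (eq_letter _ ltB) label_letter_self.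
- have := eq_letter (h z) (proj2 (h_label Uz Ut zt)).
  by rewrite (label_letterE Uz Ut zt) (label_letterE Uz Ut' zt') => -[].
Qed.

End Labelling.

Definition cone (S : set (node W)) (m : node W) (j : nat) : set (node W) :=
  [set t | S t /\ tlt lt m t /\ t.2 m.1 = j].

Section Cones.
Variable S : set (node W).
Hypothesis S_valid : forall x, S x -> valid lt p x.
Hypothesis S_meet : forall x y, S x -> S y -> exists z, S z /\ is_meet lt p x y z.

Lemma cone_meet m j x y : S m -> cone S m j x -> cone S m j y ->
  exists z, cone S m j z /\ is_meet lt p x y z.
Proof.
move=> Sm [Sx [mx jx]] [Sy [my jy]]; have [z [Sz M]] := S_meet Sx Sy.
have [vz [zx [zy z_max]]] := M.
have mz : tlt lt m z.
  apply: prefix_neq_tlt (S_valid Sm) vz (z_max m (S_valid Sm) mx.1 my.1) _.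
  move=> eqmz; rewrite -eqmz in M.
  by apply: (meet_splits (S_valid Sx) (S_valid Sy) M mx my); rewrite jx jy.
by exists z; split => //; split => //; split => //; rewrite (proj2 zx _ (proj2 mz)).
Qed.

Section Directions.
Variable e : node W -> nat.

Definition follows (t : node W) : Prop :=
  S t /\ forall r, S r -> tlt lt r t -> t.2 r.1 = e r.

Lemma follows_chain : chain lt follows.
Proof.
move=> s t [Ss fs] [St ft] neq; have [z [Sz M]] := S_meet Ss St.
case: (meet_cases (S_valid Ss) (S_valid St) neq M) => [|[|[zs zt]]]; [by left|by right|].
by rewrite (fs z Sz zs) (ft z Sz zt).
Qed.

(* A node not following e leaves e first at some r, which then follows e. *)
Lemma sub_follows_cones : S `<=`
  follows `|` \bigcup_(r in follows) \bigcup_(j in [set j | j <> e r]) cone S r j.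
Proof.
move=> t St; case: (pselect (follows t)) => [ft|nft]; [by left|right].
pose leaves_at a := exists r, [/\ S r, tlt lt r t, t.2 r.1 <> e r & r.1 = a].
have [a0 leaves0] : exists a, leaves_at a.
  apply: contrapT => none; apply: nft; split => // r Sr rt.
  by apply: contrapT => leaves; apply: none; exists r.1, r.
have [a [[r [Sr rt leaves lgr]] a_min]] := lt_minimal leaves0.
exists r; last by exists (t.2 r.1).
split => // r' Sr' r'r; rewrite (proj2 (proj1 rt) _ (proj2 r'r)).
apply: contrapT => leaves'; apply: (a_min r'.1); last by rewrite -lgr; case: r'r.
by exists r'; split => //; apply: tlt_trans rt.
Qed.

End Directions.

Lemma uncountable_split : ~ countable S ->
  (forall C, C `<=` S -> chain lt C -> countable C) ->
  exists m j j', [/\ S m, j <> j', ~ countable (cone S m j) & ~ countable (cone S m j')].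
Proof.
move=> ncS S_chains; apply: contrapT => no_split; apply: ncS.
have [e e_dir] : {e : node W -> nat & forall m j, S m -> j <> e m -> countable (cone S m j)}.
  apply: (@choice _ _ (fun m k => forall j, S m -> j <> k -> countable (cone S m j))) => m.
  case: (pselect (exists k, ~ countable (cone S m k))) => [[k nck]|none]; last first.
    by exists 0 => j _ _; apply: contrapT => ncj; apply: none; exists j.
  exists k => j Sm neq; apply: contrapT => ncj.
  by apply: no_split; exists m, j, k.
apply: (sub_countable (subset_card_le (sub_follows_cones e))).
have cF : countable (follows e) by apply: S_chains; [move=> ? []|apply: follows_chain].
apply: countable_setU => //; apply: bigcup_countable => // r [Sr _].
by apply: bigcup_countable => // j; apply: e_dir.
Qed.

Section Ranks.
Variable r : node W -> nat.
Hypothesis r_chain : forall s t, S s -> S t -> tlt lt s t -> r s <> r t.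

Lemma rank_descent : ~ countable S ->
  exists s t, [/\ S s, S t, tlt lt s t & ~ r s < r t].
Proof.
move=> ncS; apply: contrapT => incr; apply: ncS.
apply: (countable_labelled (h := r) (B := r)) => // s t Ss St st.
split; first exact: r_chain.
by apply: contrapT => nlt; apply: incr; exists s, t.
Qed.

Lemma rank_ascent_in_cone m j : S m -> ~ countable (cone S m j) ->
  exists t, cone S m j t /\ r m < r t.
Proof.
move=> Sm nc; apply: contrapT => bounded; apply: nc.
apply: (countable_labelled (h := r) (B := fun => (r m).+1)).
- by move=> x [/S_valid].
- by move=> x y; apply: cone_meet.
- move=> s t Cs [St [mt _]] st; split; first exact: r_chain Cs.1 St st.
  by rewrite ltnS leqNgt; apply/negP => ltms; apply: bounded; exists s.
Qed.

End Ranks.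
End Cones.
End Omega1Trees.

Lemma special_rank W (lt : W -> W -> Prop) (T : set (node W)) : special lt T ->
  exists r : node W -> nat, forall s t, T s -> T t -> tlt lt s t -> r s <> r t.
Proof.
case=> A [-> antiA].
have [r rA] : {r : node W -> nat & forall t, (\bigcup_n A n) t -> A (r t) t}.
  apply: (@choice _ _ (fun t k => (\bigcup_n A n) t -> A k t)) => t.
  by case: (pselect ((\bigcup_n A n) t)) => [[k _ Akt]|nT]; [exists k|exists 0].
exists r => s t Ts Tt st eqr.
by apply: (antiA (r s) s t (rA s Ts)) => //; rewrite eqr; apply: rA.
Qed.

Theorem theorem3 (W : Type) (lt : W -> W -> Prop) (Hw : is_omega1 lt)
  (Hcat : CAT lt) (p : nat) (Hp : 2 <= p) (T : set (node W))
  (HA : aronszajn lt p T) (Hs : special lt T) (Hb : binarisable lt p T) :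
  exists c : node W -> node W -> nat,
    (forall s t, T s -> T t -> tlt lt s t -> c s t <= p) /\
    forall S, subtree lt p T S ->
      exists s1 t1 s2 t2 s3 t3,
        (S s1 /\ S t1 /\ S s2 /\ S t2 /\ S s3 /\ S t3) /\
        [/\ tlt lt s1 t1, tlt lt s2 t2 & tlt lt s3 t3] /\
        [/\ c s1 t1 <> c s2 t2, c s1 t1 <> c s3 t3 & c s2 t2 <> c s3 t3].
Proof.
have [[T_valid _] _ _ T_chains] := HA.
have [r r_chain] := special_rank Hs.
exists (fun s t => if r s < r t then t.2 s.1 else p); split.
  move=> s t _ Tt [_ ltst]; case: ifP => // _.
  exact: ltnW (proj1 (T_valid t Tt s.1) ltst).
move=> S [ST ncS S_meet].
have S_valid x : S x -> valid lt p x by move/ST; apply: T_valid.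
have S_chain s t : S s -> S t -> tlt lt s t -> r s <> r t.
  by move=> /ST Ts /ST Tt; apply: r_chain.
have [s3 [t3 [Ss3 St3 st3 /negP/negbTE descent]]] :=
  rank_descent Hw S_valid S_meet S_chain ncS.
have [m [j [j' [Sm neq ncj ncj']]]] :=
  uncountable_split Hw S_valid S_meet ncS (fun C CS => T_chains C (subset_trans CS ST)).
have [t1 [[St1 [mt1 colour1]] ascent1]] :=
  rank_ascent_in_cone Hw S_valid S_meet S_chain Sm ncj.
have [t2 [[St2 [mt2 colour2]] ascent2]] :=
  rank_ascent_in_cone Hw S_valid S_meet S_chain Sm ncj'.
have colour_lt t : S t -> tlt lt m t -> t.2 m.1 < p.
  by move=> St [_ ltmt]; apply: (proj1 (S_valid t St m.1)).
exists m, t1, m, t2, s3, t3; split; first by do !split.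
split => //; rewrite descent ascent1 ascent2 colour1 colour2.
have := colour_lt t1 St1 mt1; have := colour_lt t2 St2 mt2.
by rewrite colour1 colour2 => lt_j' lt_j; split => // eqp;
  [move: lt_j | move: lt_j']; rewrite eqp ltnn.
Qed.
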